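(* In the setting below, suppose that $$g(x)=\gcd(g_{11}(x),g_{22}(x))=\gcd(g_{11}(x),g_{11}^*(x))=\gcd(g_{22}(x),g_{22}^*(x)),$$ that $g(x)$ is self-reciprocal, and that $g_{11}(x)g_{22}(x)$ is self-reciprocal. Then $C$ is symplectic LCD.
   Context: Let $q$ be a prime power, $F=\mathbb{F}_q$, $m\ge1$ with $\gcd(q,m)=1$, and $R=F[x]/\langle x^m-1\rangle$; elements of $R$ are represented by polynomials of degree $<m$ and identified with their coefficient vectors in $F^m$. A quasi-cyclic code of length $2m$ and index $2$ is an $R$-submodule $C\subseteq R^2$. For $a,b\in R$ let $\langle a,b\rangle_e$ be the standard dot product of their coefficient vectors. The symplectic form on $R^2$ is $\langle (a_1,a_2),(b_1,b_2)\rangle_s=\langle a_1,b_2\rangle_e-\langle a_2,b_1\rangle_e$; $C$ is symplectic LCD if $C\cap C^{\perp_s}=\{0\}$. For a nonzero polynomial $f$ of degree $k$, $f^*(x)=x^kf(x^{-1})$; $f$ is self-reciprocal if $f^*=\alpha f$ for some $\alpha\in F$. Gcds are taken monic. Suppose $C$ is generated as an $R$-module by $(g_{11}(x),g_{12}(x))$ and $(0,g_{22}(x))$, where $g_{11},g_{12},g_{22}\in F[x]$ satisfy: $g_{11}\mid x^m-1$, $g_{22}\mid x^m-1$, $\deg g_{12}<\deg g_{22}$, and $g_{11}g_{22}\mid (x^m-1)g_{12}$. *)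

From HB Require Import structures.
From mathcomp Require Import all_boot all_order all_algebra all_field.
Set Implicit Arguments. Unset Strict Implicit. Unset Printing Implicit Defensive.
Import GRing.Theory.
Local Open Scope ring_scope.

(* Reciprocal polynomial f^*(x) = x^(deg f) f(1/x): coefficient i is f_(deg f - i). *)
Definition recip (F : fieldType) (f : {poly F}) : {poly F} :=
  \poly_(i < size f) f`_((size f).-1 - i).

Definition self_recip (F : fieldType) (f : {poly F}) : Prop :=
  f != 0 /\ exists alpha : F, recip f = alpha *: f.

(* Monic gcd (gcd 0 0 = 0). *)
Definition mgcd (F : fieldType) (p q : {poly F}) : {poly F} :=
  (lead_coef (gcdp p q))^-1 *: gcdp p q.

(* R = F[x]/<x^m - 1>, elements represented by polynomials of degree < m. *)
Definition redm (F : fieldType) (m : nat) (p : {poly F}) : {poly F} :=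
  p %% ('X^m - 1).

Definition dot_e (F : fieldType) (m : nat) (a b : {poly F}) : F :=
  \sum_(i < m) a`_i * b`_i.

Definition symp (F : fieldType) (m : nat) (u v : {poly F} * {poly F}) : F :=
  dot_e m u.1 v.2 - dot_e m u.2 v.1.

Definition qc_code (F : fieldType) (m : nat) (g11 g12 g22 : {poly F})
  (c : {poly F} * {poly F}) : Prop :=
  exists a b : {poly F},
    c = (redm m (a * g11), redm m (a * g12 + b * g22)).

Definition symplectic_LCD (F : fieldType) (m : nat)
  (C : {poly F} * {poly F} -> Prop) : Prop :=
  forall c, C c -> (forall d, C d -> symp m c d = 0) -> c = (0, 0).

From HB Require Import structures.
From mathcomp Require Import all_boot all_order all_algebra all_field.
From mathcomp Require Import zify ring.
Set Implicit Arguments. Unset Strict Implicit. Unset Printing Implicit Defensive.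
Import GRing.Theory.
Local Open Scope ring_scope.

(* Write M = x^m - 1 and q^* for the reciprocal of q. Since <u, x^t v>_e is the
   coefficient of x^t in u v(x^-1) mod M, an element u of R is orthogonal to the
   ideal (q) exactly when M divides u q^*.
   The hypotheses force g11^* | g22 (and symmetrically g22^* | g11): g11^*
   divides the self-reciprocal g11 g22, its common part with g11, which equals
   gcd(g11, g22), divides g22, and the rest is coprime to g11 because M is
   separable (m is invertible in F). Hence M / g11 is coprime to g22^* and
   M / g22 to g11^*.
   If (a g11, a g12 + b g22) in C is orthogonal to C, pairing it with (0, r g22)
   gives M | a g11 g22^*, hence M | a g11; then g22 | a g12, the second component
   is some t g22, and pairing with (r g11, r g12) gives M | t g22. *)

Lemma natf_neq0_coprime_card (F : finFieldType) (m : nat) :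
  coprime #|F| m -> m%:R != 0 :> F.
Proof.
move=> coFm; have [p p_pr pcharFp] := finPcharP F.
have p_dvd_F : (p %| #|F|)%N.
  have := card_pprimeChar pcharFp; case: (logn _ _) => [|k] cardF.
    by have := finNzRing_gt1 F; rewrite [X in (1 < X)%N]cardF.
  by rewrite [X in (_ %| X)%N]cardF expnS dvdn_mulr.
rewrite -(dvdn_pcharf pcharFp); apply: contraL coFm => p_dvd_m.
by apply/negP => /(coprime_dvdl p_dvd_F); rewrite prime_coprime // p_dvd_m.
Qed.

Section PolyFacts.
Variable F : fieldType.
Implicit Types p q u v : {poly F}.

Lemma mgcd_eqp p q : mgcd p q %= gcdp p q.
Proof.
rewrite /mgcd; have [-> | g_neq0] := eqVneq (gcdp p q) 0; first by rewrite scaler0 eqpxx.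
by rewrite eqp_scale // invr_eq0 lead_coef_eq0.
Qed.

Lemma eqp_gcdp_mgcd p q u v : mgcd p q = mgcd u v -> gcdp p q %= gcdp u v.
Proof. by move=> e; rewrite -(eqp_ltrans (mgcd_eqp p q)) e mgcd_eqp. Qed.

Lemma modp_eq_dvdp d u v : d %| u - v -> u %% d = v %% d.
Proof. by move=> /modp_eq0P; rewrite modpD modpN => /eqP; rewrite subr_eq0 => /eqP. Qed.

Lemma dvdp_Gauss_cofactor d p y s :
  p %| d -> p != 0 -> coprimep (d %/ p) s -> p %| y -> d %| y * s -> d %| y.
Proof.
move=> p_dvd_d p_neq0 cop /dvdpP [z ->].
by rewrite -(divpK p_dvd_d) mulrAC !dvdp_mul2r // Gauss_dvdpl.
Qed.

Lemma dvdp_mul_cofactor d p q y s :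
  p %| d -> p != 0 -> p * q %| d * s -> d %| y * p -> q %| y * s.
Proof.
move=> p_dvd_d p_neq0 pq_dvd; rewrite -(divpK p_dvd_d) dvdp_mul2r // => /dvdpP [k ->].
by rewrite -mulrA dvdp_mull // -(dvdp_mul2l _ _ p_neq0) mulrA divpKC.
Qed.

Lemma Xn_sub_1_dvdp_XB (N a b : nat) : a = b %[mod N] ->
  ('X^N - 1 : {poly F}) %| 'X^a - 'X^b.
Proof.
wlog le_ba : a b / (b <= a)%N.
  move=> W eq_ab; case: (leqP b a) => [le_ba | /ltnW le_ab]; first exact: W.
  by rewrite -dvdpNr opprB; apply: W le_ab (esym eq_ab).
move=> eq_ab; have [k ->] : exists k, a = (b + N * k)%N.
  exists ((a - b) %/ N)%N; rewrite mulnC divnK ?subnKC //.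
  by rewrite -eqn_mod_dvd // eq_ab.
rewrite exprD -{2}['X^b]mulr1 -mulrBr dvdp_mull // exprM.
by have := subrXX ('X^N : {poly F}) 1 k; rewrite expr1n => ->; rewrite dvdp_mulr.
Qed.

End PolyFacts.

(* [conjm N v] represents v(x^-1) in F[x]/(x^N - 1), where x^(N-1) = x^-1. *)
Definition conjm (F : fieldType) (N : nat) (v : {poly F}) := v \Po 'X^(N.-1).

Section Reciprocal.
Variable F : fieldType.
Implicit Types p q : {poly F}.

Lemma recip_conjm (N : nat) q : (0 < N)%N ->
  ('X^N - 1 : {poly F}) %| recip q - 'X^((size q).-1) * conjm N q.
Proof.
move=> N_gt0; rewrite /recip poly_def /conjm comp_polyE mulr_sumr.
rewrite (reindex_inj rev_ord_inj) -sumrB /=.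
apply: (big_ind (fun r => _ %| r)) => [|r s|i _]; [exact: dvdp0 | exact: dvdp_add |].
case: i => /= i i_lt.
have -> : ((size q).-1 - (size q - i.+1) = i)%N by move: (size q) i_lt; lia.
rewrite -scalerAr -scalerBr -exprM -exprD.
rewrite -mul_polyC dvdp_mull // Xn_sub_1_dvdp_XB //.
have -> : ((size q).-1 + N.-1 * i = size q - i.+1 + N * i)%N by move: (size q) i_lt; nia.
by rewrite addnC mulnC modnMDl.
Qed.

Lemma recip0 : recip (0 : {poly F}) = 0.
Proof. by rewrite /recip size_poly0 poly_def big_ord0. Qed.

Lemma recip_eq0 p : (recip p == 0) = (p == 0).
Proof.
apply/idP/idP => [|/eqP->]; last by rewrite recip0.
apply: contraLR => p_neq0; apply/eqP => /polyP/(_ 0%N).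
rewrite coef_poly size_poly_gt0 p_neq0 subn0 coef0 => /eqP.
by rewrite lead_coef_eq0 (negbTE p_neq0).
Qed.

Lemma size_recip p : (size (recip p) <= size p)%N.
Proof. exact: size_poly. Qed.

(* Both sides are congruent to x^(deg p + deg q) (pq)(x^-1) modulo x^N - 1,
   and N is chosen larger than both of their degrees. *)
Lemma recipM p q : recip (p * q) = recip p * recip q.
Proof.
have [-> | p_neq0] := eqVneq p 0; first by rewrite mul0r recip0 mul0r.
have [-> | q_neq0] := eqVneq q 0; first by rewrite mulr0 recip0 mulr0.
set N := (size p + size q)%N.
have N_gt0 : (0 < N)%N by rewrite addn_gt0 size_poly_gt0 p_neq0.
have size_pq : (size (p * q)).-1 = ((size p).-1 + (size q).-1)%N.
  rewrite size_mul //; move: (size_poly_gt0 p) (size_poly_gt0 q).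
  by rewrite p_neq0 q_neq0; move: (size p) (size q); lia.
have congr_N : ('X^N - 1 : {poly F}) %| recip (p * q) - recip p * recip q.
  have -> : recip (p * q) - recip p * recip q =
     (recip (p * q) - 'X^((size (p * q)).-1) * conjm N (p * q))
     - (recip p - 'X^((size p).-1) * conjm N p) * recip q
     - 'X^((size p).-1) * conjm N p * (recip q - 'X^((size q).-1) * conjm N q).
    by rewrite /conjm comp_polyM size_pq exprD; ring.
  rewrite dvdp_sub ?dvdp_mull ?recip_conjm // dvdp_sub ?recip_conjm //.
  by rewrite dvdp_mulr ?recip_conjm.
have size_lt : (size (recip (p * q) - recip p * recip q)%R < size ('X^N - 1 : {poly F})%R)%N.
  rewrite -polyC1 size_XnsubC // ltnS.
  apply: leq_trans (size_polyD _ _) _; rewrite size_polyN geq_max; apply/andP; split.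
    by rewrite (leq_trans (size_recip _)) // size_mul // leq_pred.
  apply: leq_trans (size_polyMleq _ _) (leq_trans (leq_pred _) _).
  exact: leq_add (size_recip p) (size_recip q).
by apply/eqP; rewrite -subr_eq0 -(modp_small size_lt) (modp_eq0 congr_N).
Qed.

Lemma recip_dvdp p q : p %| q -> recip p %| recip q.
Proof. by move=> /dvdpP [r ->]; rewrite recipM dvdp_mull. Qed.

Lemma recip_Xn_sub_1 (m : nat) : (0 < m)%N -> recip ('X^m - 1 : {poly F}) = - ('X^m - 1).
Proof.
move=> m_gt0; apply/polyP => k.
rewrite coef_poly -polyC1 size_XnsubC // coefN !coefB !coefXn !coefC ltnS /=.
have [-> | k_neq0] := eqVneq k 0%N.
  by rewrite subn0 eqxx gtn_eqF // ltn_eqF // subr0 sub0r opprK.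
have [-> | k_neq_m] := eqVneq k m.
  by rewrite leqnn subnn eqxx ltn_eqF // subr0 sub0r.
rewrite mulr0n subr0 oppr0; case: leqP => // k_le_m.
have -> : (m - k == m)%N = false by apply/eqP; lia.
have -> : (m - k == 0)%N = false by apply/eqP; lia.
by rewrite subr0.
Qed.

End Reciprocal.

Section QuotientRing.
Variables (F : fieldType) (m : nat).
Hypothesis m_gt0 : (0 < m)%N.
Local Notation M := ('X^m - 1 : {poly F}).
Implicit Types p q u v y U : {poly F}.

Lemma dot_e0r u : dot_e m u 0 = 0.
Proof. by rewrite /dot_e big1 // => i _; rewrite coef0 mulr0. Qed.

Lemma dot_e0l u : dot_e m 0 u = 0.
Proof. by rewrite /dot_e big1 // => i _; rewrite coef0 mul0r. Qed.

Lemma redm_eq0 p : M %| p -> redm m p = 0.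
Proof. exact: modp_eq0. Qed.

Lemma size_Xn_sub_1 : size M = m.+1.
Proof. by rewrite -polyC1 size_XnsubC. Qed.

Lemma Xn_sub_1_neq0 : M != 0.
Proof. by rewrite -size_poly_eq0 size_Xn_sub_1. Qed.

Lemma Xn_sub_1_dvdp_neq0 p : p %| M -> p != 0.
Proof. by apply: contraTneq => ->; rewrite dvd0p Xn_sub_1_neq0. Qed.

Lemma size_redm p : (size (redm m p) <= m)%N.
Proof. by rewrite -ltnS -size_Xn_sub_1 ltn_modp Xn_sub_1_neq0. Qed.

Lemma redm_Xn (a : nat) : redm m 'X^a = 'X^(a %% m) :> {poly F}.
Proof.
rewrite /redm (@modp_eq_dvdp _ _ _ 'X^(a %% m)); last by rewrite Xn_sub_1_dvdp_XB ?modn_mod.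
by rewrite modp_small // size_polyXn size_Xn_sub_1 ltnS ltn_pmod.
Qed.

Lemma coef_redm_sum (I : Type) (r : seq I) (G : I -> {poly F}) (k : nat) :
  (redm m (\sum_(i <- r) G i))`_k = \sum_(i <- r) (redm m (G i))`_k.
Proof. by rewrite /redm (big_morph (fun p => p %% M) (modpD M) (mod0p M)) coef_sum. Qed.

Lemma coef_redm_Xn_conjm v (j t : nat) : (j < m)%N -> (t < m)%N ->
  (redm m ('X^j * conjm m v))`_t = (redm m ('X^t * v))`_j.
Proof.
move=> j_lt_m t_lt_m.
have -> : 'X^t * v = \sum_(i < size v) v`_i *: 'X^(t + i).
  rewrite -{1}[v]coefK poly_def mulr_sumr.
  by apply: eq_bigr => i _; rewrite -scalerAr exprD.
rewrite /conjm comp_polyE mulr_sumr !coef_redm_sum; apply: eq_bigr => i _.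
rewrite -scalerAr /redm !modpZl !coefZ -exprM -exprD -!/(redm _ _) !redm_Xn !coefXn.
congr (_ * (_ : bool)%:R).
rewrite -[t in LHS](modn_small t_lt_m) -(eqn_modDr i) -addnA.
have -> : (m.-1 * i + i = m * i)%N by rewrite -mulSnr prednK.
by rewrite [(j + _)%N]addnC mulnC modnMDl (modn_small j_lt_m) eq_sym.
Qed.

Lemma coef_redm_mul_conjm U v (t : nat) : (size U <= m)%N -> (t < m)%N ->
  (redm m (U * conjm m v))`_t = dot_e m U (redm m ('X^t * v)).
Proof.
move=> size_U t_lt_m.
have U_def : U = \sum_(j < m) U`_j *: 'X^j.
  rewrite -poly_def; apply/polyP => k; rewrite coef_poly.
  by case: ltnP => // m_le_k; rewrite nth_default // (leq_trans size_U).
rewrite {1}U_def mulr_suml coef_redm_sum; apply: eq_bigr => j _.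
by rewrite -scalerAl /redm modpZl coefZ -/(redm _ _) coef_redm_Xn_conjm.
Qed.

Lemma Xn_sub_1_dvdp_mul_recip y q :
  (forall r, dot_e m (redm m y) (redm m (r * q)) = 0) -> M %| y * recip q.
Proof.
move=> orth.
have M_dvd_conj : M %| redm m y * conjm m q.
  apply/modp_eq0P/polyP => t; rewrite coef0 -/(redm _ _).
  case: (ltnP t m) => [t_lt_m | m_le_t].
    by rewrite coef_redm_mul_conjm ?size_redm // orth.
  by rewrite nth_default // (leq_trans (size_redm _) m_le_t).
have {}M_dvd_conj : M %| y * conjm m q.
  rewrite [y](divp_eq y M) mulrDl dvdp_add // mulrAC.
  exact: dvdp_mull.
rewrite -(subrK ('X^((size q).-1) * conjm m q) (recip q)) mulrDr.
rewrite dvdp_add //; first by rewrite dvdp_mull ?recip_conjm.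
by rewrite mulrCA dvdp_mull.
Qed.

End QuotientRing.

Section Separable.
Variables (F : fieldType) (m : nat).
Hypotheses (m_gt0 : (0 < m)%N) (m_neq0 : m%:R != 0 :> F).
Local Notation M := ('X^m - 1 : {poly F}).
Implicit Types p q : {poly F}.

Lemma coprimep_dvdp_Xn_sub_1 p q : p * q %| M -> coprimep p q.
Proof. exact/separable_coprime/separable_Xn_sub_1. Qed.

Lemma recip_dvdp_cofactor p q : p %| M ->
  gcdp p q %= gcdp p (recip p) -> self_recip (p * q) -> recip p %| q.
Proof.
move=> p_dvd_M gcd_pq [pq_neq0 [alpha recip_pq]].
have p_neq0 : p != 0 by apply: contraNneq pq_neq0 => ->; rewrite mul0r.
have alpha_neq0 : alpha != 0.
  by apply: contraNneq pq_neq0 => alpha0; rewrite -recip_eq0 recip_pq alpha0 scale0r.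
set d := recip p; set u := gcdp p d.
have d_dvd_pq : d %| p * q by rewrite -(dvdpZr _ _ alpha_neq0) -recip_pq recipM dvdp_mulr.
have d_dvd_M : d %| M by rewrite -dvdpNr -recip_Xn_sub_1 // recip_dvdp.
have u_dvd_q : u %| q by rewrite /u -(eqp_dvdl _ gcd_pq) dvdp_gcdr.
have u_neq0 : u != 0 by rewrite gcdp_eq0 negb_and p_neq0.
have d_eq : d = d %/ u * u by rewrite divpK // dvdp_gcdr.
have d_dvd_uq : d %| u * q.
  by rewrite (eqp_dvdr _ (mulp_gcdl _ _ _)) dvdp_gcd d_dvd_pq dvdp_mulr.
have du_dvd_q : d %/ u %| q by rewrite -(dvdp_mul2r _ _ u_neq0) -d_eq mulrC.
have coprime_du_u : coprimep (d %/ u) u by apply: coprimep_dvdp_Xn_sub_1; rewrite -d_eq.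
by rewrite d_eq Gauss_dvdp // du_dvd_q u_dvd_q.
Qed.

Lemma coprimep_cofactor_recip p q : p %| M -> q %| M ->
  gcdp q p %= gcdp q (recip q) -> self_recip (q * p) -> coprimep (M %/ p) (recip q).
Proof.
move=> p_dvd_M q_dvd_M gcd_qp sr_qp.
have recip_q_dvd_p := recip_dvdp_cofactor q_dvd_M gcd_qp sr_qp.
apply: coprimep_dvdp_Xn_sub_1.
by rewrite -[X in _ %| X](divpK p_dvd_M) dvdp_mul.
Qed.

End Separable.

Unset Implicit Arguments.

Theorem corollary5p7 (F : finFieldType) (m : nat) (g11 g12 g22 : {poly F}) :
  (0 < m)%N ->
  coprime #|F| m ->
  g11 %| 'X^m - 1 ->
  g22 %| 'X^m - 1 ->
  (size g12 < size g22)%N ->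
  g11 * g22 %| ('X^m - 1) * g12 ->
  mgcd g11 g22 = mgcd g11 (recip g11) ->
  mgcd g11 g22 = mgcd g22 (recip g22) ->
  self_recip (mgcd g11 g22) ->
  self_recip (g11 * g22) ->
  symplectic_LCD m (qc_code m g11 g12 g22).
Proof.
move=> m_gt0 coFm g11_dvd g22_dvd _ g12_dvd gcd11 gcd22 _ sr.
have m_neq0 := natf_neq0_coprime_card coFm.
have g11_neq0 := Xn_sub_1_dvdp_neq0 m_gt0 g11_dvd.
have g22_neq0 := Xn_sub_1_dvdp_neq0 m_gt0 g22_dvd.
have cop11 : coprimep (('X^m - 1) %/ g11) (recip g22).
  apply: coprimep_cofactor_recip => //; last by rewrite mulrC.
  exact: eqp_trans (gcdpC _ _) (eqp_gcdp_mgcd gcd22).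
have cop22 : coprimep (('X^m - 1) %/ g22) (recip g11).
  exact: coprimep_cofactor_recip (eqp_gcdp_mgcd gcd11) sr.
move=> _ [a [b ->]] orth.
have M_dvd_a11 : 'X^m - 1 %| a * g11.
  apply: (dvdp_Gauss_cofactor g11_dvd g11_neq0 cop11) => //; first exact: dvdp_mull.
  apply: Xn_sub_1_dvdp_mul_recip => // r.
  have := orth _ (ex_intro _ 0 (ex_intro _ r erefl)).
  by rewrite /symp /= !mul0r add0r (redm_eq0 (dvdp0 _)) dot_e0r subr0.
have g22_dvd_a12 := dvdp_mul_cofactor g11_dvd g11_neq0 g12_dvd M_dvd_a11.
set t := a * g12 %/ g22 + b.
have t_def : a * g12 + b * g22 = t * g22 by rewrite mulrDl divpK.
have M_dvd_t22 : 'X^m - 1 %| t * g22.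
  apply: (dvdp_Gauss_cofactor g22_dvd g22_neq0 cop22) => //; first exact: dvdp_mull.
  apply: Xn_sub_1_dvdp_mul_recip => // r.
  have := orth _ (ex_intro _ r (ex_intro _ 0 erefl)).
  rewrite /symp /= mul0r addr0 (redm_eq0 M_dvd_a11) dot_e0l sub0r t_def.
  by move/eqP; rewrite oppr_eq0 => /eqP.
by rewrite t_def !redm_eq0.
Qed.
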